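(* Let $\mathbb{A}$ and $\mathbb{B}$ be $\sigma$-structures. Then $\mathbb{A}\succeq\mathbb{B}$ (i.e. $\mathrm{opt}(\mathbb{A},\mathbb{C})\ge\mathrm{opt}(\mathbb{B},\mathbb{C})$ for every $\sigma$-structure $\mathbb{C}$) if and only if there is an overcast from $\mathbb{A}$ to $\mathbb{B}$.
   Context: A signature $\sigma$ is a finite set of symbols $f$ with arities $\mathrm{ar}(f)$; a $\sigma$-structure $\mathbb{A}$ is a finite domain $A$ with functions $f^{\mathbb{A}}\colon A^{\mathrm{ar}(f)}\to\mathbb{Q}_{\ge0}$. $\mathrm{tup}(\mathbb{A})$ is the set of pairs $(f,\bar x)$, $f\in\sigma$, $\bar x\in A^{\mathrm{ar}(f)}$. For a map $h\colon A\to C$, $\mathrm{val}(h)=\sum_{(f,\bar x)\in\mathrm{tup}(\mathbb{A})}f^{\mathbb{A}}(\bar x)f^{\mathbb{C}}(h(\bar x))$ and $\mathrm{opt}(\mathbb{A},\mathbb{C})=\max_h\mathrm{val}(h)$ over all maps $A\to C$. An overcast from $\mathbb{A}$ to $\mathbb{B}$ is a probability distribution $\omega$ (with rational probabilities) over the set $B^A$ of all maps $A\to B$ such that for every $(f,\bar x)\in\mathrm{tup}(\mathbb{B})$, $\mathbb{E}_{g\sim\omega}f^{\mathbb{A}}(g^{-1}(\bar x))\ge f^{\mathbb{B}}(\bar x)$, where $f^{\mathbb{A}}(g^{-1}(\bar x))$ denotes the sum of $f^{\mathbb{A}}(\bar y)$ over all $\bar y\in A^{\mathrm{ar}(f)}$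 with $g(\bar y)=\bar x$. *)

From HB Require Import structures.
From mathcomp Require Import all_boot all_order all_algebra.
Set Implicit Arguments. Unset Strict Implicit. Unset Printing Implicit Defensive.
Import Order.TTheory GRing.Theory Num.Theory.
Local Open Scope ring_scope.

Record signature := Signature { sym : finType; ar : sym -> nat }.

Unset Implicit Arguments.
Record structure (s : signature) := Structure {
  dom : finType;
  dom_nonempty : (0 < #|dom|)%N;
  interp : forall f : sym s, (ar f).-tuple dom -> rat;
  interp_ge0 : forall (f : sym s) (x : (ar f).-tuple dom), 0 <= interp f x }.

Set Implicit Arguments.
Arguments dom {s}.
Arguments interp {s}.

Definition val (s : signature) (A C : structure s) (h : {ffun dom A -> dom C}) : rat :=
  \sum_(f : sym s) \sum_(x : (ar f).-tuple (dom A))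
     interp A f x * interp C f (map_tuple h x).

(* opt(A,C) = max over all maps h : A -> C of val(h)
   (the set of maps is nonempty since domains are nonempty; val >= 0). *)
Definition opt (s : signature) (A C : structure s) : rat :=
  \big[Num.max/0]_(h : {ffun dom A -> dom C}) val h.

Definition succeq (s : signature) (A B : structure s) : Prop :=
  forall C : structure s, opt B C <= opt A C.

Definition preim_weight (s : signature) (A B : structure s)
    (g : {ffun dom A -> dom B}) (f : sym s) (x : (ar f).-tuple (dom B)) : rat :=
  \sum_(y : (ar f).-tuple (dom A) | map_tuple g y == x) interp A f y.

Definition overcast (s : signature) (A B : structure s)
    (w : {ffun {ffun dom A -> dom B} -> rat}) : Prop :=
  [/\ forall g, 0 <= w g,
      \sum_g w g = 1 &
      forall (f : sym s) (x : (ar f).-tuple (dom B)),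
        interp B f x <= \sum_g w g * preim_weight g x].

From Pilot Require Import Defs.
From mathcomp Require Import all_boot all_order all_algebra.
From mathcomp Require Import ring lra.
Import Order.TTheory GRing.Theory Num.Theory.
Local Open Scope ring_scope.

(* If w is an overcast, then every h : B -> C satisfies
   val h <= E_{g ~ w} val (h \o g) <= opt(A, C), because each tuple x of B
   carries an expected A-weight of at least f^B(x) in its g-preimage.
   Conversely, if no overcast exists, Ville's theorem of the alternative
   (proved by Fourier-Motzkin elimination, one row at a time) yields weights
   z >= 0 on tup(B) with sum_(f,x) z(f,x) (f^A(g^-1(x)) - f^B(x)) < 0 for
   every g : A -> B.  Let C be B reweighted by f^C(x) = z(f,x): every map
   A -> C has smaller value than the identity of B, so opt(A,C) < opt(B,C). *)

Lemma exists_between (R : realFieldType) (I J : finType) (P : pred I) (Q : pred J)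
    (a : I -> R) (b : J -> R) (x0 : R) :
    (forall j, Q j -> x0 < b j) -> (forall i j, P i -> Q j -> a i < b j) ->
  exists t, [/\ x0 < t, forall i, P i -> a i < t & forall j, Q j -> t < b j].
Proof.
move=> x0_lt_b a_lt_b.
pose lo := \big[Num.max/x0]_(i | P i) a i.
pose hi := \big[Num.min/(lo + 1)]_(j | Q j) b j.
have lo_lt_hi : lo < hi.
  apply/bigmin_gtP; split=> [|j Qj]; first by rewrite ltrDl.
  by apply/bigmax_ltP; split=> [|i Pi]; [apply: x0_lt_b | apply: a_lt_b].
have x0_le_lo : x0 <= lo := bigmax_ge_id _ _ _ _.
have a_le_lo i : P i -> a i <= lo by move=> Pi; apply: le_bigmax_cond.
have hi_le_b j : Q j -> hi <= b j by move=> Qj; apply: bigmin_le_cond.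
exists ((lo + hi) / 2); split=> [|i /a_le_lo|j /hi_le_b]; lra.
Qed.

Lemma sum_mul_delta {R : pzSemiRingType} {J : finType} (q : J -> R) (j : J) :
  \sum_k q k * (k == j)%:R = q j.
Proof.
under eq_bigr do rewrite mulr_natr mulrb.
by rewrite -big_mkcond big_pred1_eq.
Qed.

Section ConeGenerators.

Context {R : realFieldType} {J : finType} (r : J -> R).

(* The cone {y >= 0 | r . y >= 0} is generated by the unit vectors e_j with
   r_j >= 0 and the vectors -r_j' e_j + r_j e_j' with r_j > 0 > r_j';
   [cone_gen_dot q c] is the scalar product of q with the generator c, and
   [cone_comb y] is the combination of the generators with coefficients y. *)
Definition cone_index : finType :=
  ({j : J | 0 <= r j} + {p : J * J | (0 < r p.1) && (r p.2 < 0)})%type.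

Definition cone_gen_dot (q : J -> R) (c : cone_index) : R :=
  match c with
  | inl j => q (val j)
  | inr p => - r (val p).2 * q (val p).1 + r (val p).1 * q (val p).2
  end.

Definition cone_comb (y : cone_index -> R) (k : J) : R :=
  \sum_c y c * cone_gen_dot (fun j => (k == j)%:R) c.

Lemma cone_gen_dot_row c : 0 <= cone_gen_dot r c.
Proof.
case: c => [j|p] /=; first exact: valP j.
by rewrite mulNr [r _ * r _]mulrC addNr.
Qed.

Lemma cone_gen_dot1_gt0 c : 0 < cone_gen_dot (fun=> 1) c.
Proof. by case: c => [//|[[i j] /= /andP[]]]; lra. Qed.

Lemma cone_gen_dot_sum (I : Type) (s : seq I) (z : I -> R) (M : I -> J -> R) c :
  \sum_(i <- s) z i * cone_gen_dot (M i) c =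
  cone_gen_dot (fun k => \sum_(i <- s) z i * M i k) c.
Proof.
case: c => [//|p] /=; rewrite !mulr_sumr -big_split /=.
by apply: eq_bigr => i _; ring.
Qed.

Lemma cone_comb_ge0 y : (forall c, 0 <= y c) -> forall k, 0 <= cone_comb y k.
Proof.
move=> y_ge0 k; apply: sumr_ge0 => c _; apply: mulr_ge0 => //.
case: c => [//|[[i j] /= /andP[ri rj]]].
by apply: addr_ge0; apply: mulr_ge0; rewrite ?ler0n //; lra.
Qed.

Lemma dot_cone_comb (q : J -> R) y :
  \sum_k q k * cone_comb y k = \sum_c y c * cone_gen_dot q c.
Proof.
under eq_bigr do rewrite mulr_sumr.
rewrite exchange_big; apply: eq_bigr => c _.
under eq_bigr do rewrite mulrCA.
rewrite -mulr_sumr; congr (_ * _).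
case: c => [j|p] /=; first exact: sum_mul_delta.
under eq_bigr do rewrite mulrDr mulrCA [q _ * (r _ * _)]mulrCA.
by rewrite big_split /= -!mulr_sumr !sum_mul_delta.
Qed.

Lemma sum_cone_comb_gt0 y :
  (forall c, 0 <= y c) -> 0 < \sum_c y c -> 0 < \sum_k cone_comb y k.
Proof.
move=> y_ge0 y_pos.
have /eqP/(psumr_neq0P (fun c _ => y_ge0 c))[c /= y_c_gt0] := lt0r_neq0 y_pos.
have -> : \sum_k cone_comb y k = \sum_c y c * cone_gen_dot (fun=> 1) c.
  by rewrite -dot_cone_comb; apply: eq_bigr => k _; rewrite mul1r.
have terms_ge0 c' : 0 <= y c' * cone_gen_dot (fun=> 1) c'.
  by rewrite mulr_ge0 // ltW // cone_gen_dot1_gt0.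
rewrite lt_def sumr_ge0 // andbT psumr_neq0 //.
by apply/hasP; exists c; rewrite ?mem_index_enum // mulr_gt0 // cone_gen_dot1_gt0.
Qed.

Lemma fourier_motzkin (v : J -> R) :
  (forall c, cone_gen_dot v c < 0) -> exists2 t, 0 <= t & forall k, t * r k + v k < 0.
Proof.
move=> v_lt0.
have v_lt0_inl j (rj : 0 <= r j) : v j < 0 := v_lt0 (inl (exist _ j rj)).
have v_lt0_inr i j (ri : 0 < r i) (rj : r j < 0) : - r j * v i + r i * v j < 0.
  by have := v_lt0 (inr (exist _ (i, j) (introT andP (conj ri rj)))).
have [i ri|j i rj ri|t [t_gt0 lo_t t_hi]] := @exists_between R _ _
    (fun j => r j < 0) (fun i => 0 < r i) (fun j => v j / - r j) (fun i => - v i / r i) 0.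
- by rewrite divr_gt0 // oppr_gt0 v_lt0_inl // ltW.
- have rj' : 0 < - r j by rewrite oppr_gt0.
  rewrite ltr_pdivrMr // mulrAC ltr_pdivlMr //.
  by have := v_lt0_inr i j ri rj; lra.
exists t => [|k]; first exact: ltW.
case: (ltgtP (r k) 0) => rk.
- have rk' : 0 < - r k by rewrite oppr_gt0.
  by have := lo_t k rk; rewrite ltr_pdivrMr //; lra.
- by have := t_hi k rk; rewrite ltr_pdivlMr //; lra.
- by rewrite rk mulr0 add0r v_lt0_inl // rk.
Qed.

End ConeGenerators.

Lemma ville_seq {R : realFieldType} {I : finType} {s : seq I} : uniq s ->
  forall (J : finType) (M : I -> J -> R),
  (exists y : J -> R, [/\ forall j, 0 <= y j, 0 < \sum_j y j &
                          forall i, i \in s -> 0 <= \sum_j M i j * y j])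
  \/ (exists2 z : I -> R, forall i, 0 <= z i &
                          forall j, \sum_(i <- s) z i * M i j < 0).
Proof.
elim: s => [_ J M|a s IHs /= /andP[a_notin_s s_uniq] J M].
  have [j0 _ | J0] := pickP (@predT J); [left | right].
    exists (fun j => (j == j0)%:R); split=> [j||//]; first exact: ler0n.
    by have := sum_mul_delta (fun=> 1 : R) j0; under eq_bigr do rewrite mul1r; move=> ->.
  by exists (fun=> 0) => // j; have := J0 j.
have [[y [y_ge0 y_pos yM]]|[z z_ge0 zM]] :=
  IHs s_uniq (cone_index (M a)) (fun i => cone_gen_dot (M a) (M i)).
  left; exists (cone_comb (M a) y); split.
  - exact: cone_comb_ge0.
  - exact: sum_cone_comb_gt0.
  move=> i; rewrite dot_cone_comb inE => /predU1P[->|/yM].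
    by apply: sumr_ge0 => c _; rewrite mulr_ge0 ?cone_gen_dot_row.
  by under eq_bigr do rewrite mulrC.
right; pose v k := \sum_(i <- s) z i * M i k.
have [c|t t_ge0 tM] := @fourier_motzkin _ _ (M a) v; first by rewrite -cone_gen_dot_sum.
exists (fun i => if i == a then t else z i) => [i|j]; first by case: eqP.
rewrite big_cons eqxx; congr (_ + _ < 0): (tM j).
rewrite /v big_seq_cond [RHS]big_seq_cond; apply: eq_bigr => i /andP[si _].
by case: eqP si => // ->; rewrite (negbTE a_notin_s).
Qed.

Lemma ville_alternative {R : realFieldType} {I J : finType} (M : I -> J -> R) :
  (exists y : J -> R, [/\ forall j, 0 <= y j, 0 < \sum_j y j &
                          forall i, 0 <= \sum_j M i j * y j])
  \/ (exists2 z : I -> R, forall i, 0 <= z i & forall j, \sum_i z i * M i j < 0).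
Proof.
have [[y [y_ge0 y_pos yM]]|[z z_ge0 zM]] := ville_seq (enum_uniq I) _ M.
  by left; exists y; split=> // i; apply: yM; rewrite mem_enum.
by right; exists z => // j; rewrite -big_enum.
Qed.

Section Structures.

Context {s : signature}.

Definition tup (B : structure s) : finType := {f : sym s & (ar f).-tuple (dom B)}.

Lemma sum_preim_weight {A B : structure s} (g : {ffun dom A -> dom B}) (f : sym s)
    (F : (ar f).-tuple (dom B) -> rat) :
  \sum_y interp A f y * F (map_tuple g y) = \sum_x F x * preim_weight g x.
Proof.
rewrite (partition_big (map_tuple g) predT) //; apply: eq_bigr => x _.
by rewrite mulr_sumr; apply: eq_bigr => y /eqP <-; rewrite mulrC.
Qed.

Lemma val_comp {A B C : structure s} (g : {ffun dom A -> dom B})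
    (h : {ffun dom B -> dom C}) :
  Defs.val [ffun a => h (g a)] =
  \sum_f \sum_x interp C f (map_tuple h x) * preim_weight g x.
Proof.
apply: eq_bigr => f _; rewrite -sum_preim_weight; apply: eq_bigr => y _.
by congr (_ * interp C f _); apply: eq_from_tnth => i; rewrite !tnth_map ffunE.
Qed.

Lemma val_le_opt (A C : structure s) (h : {ffun dom A -> dom C}) :
  Defs.val h <= opt A C.
Proof. exact: le_bigmax. Qed.

Lemma opt_lt {A C : structure s} {c : rat} :
  (forall h : {ffun dom A -> dom C}, Defs.val h < c) -> opt A C < c.
Proof.
move=> val_lt; apply/bigmax_ltP; split=> [|h _]; last exact: val_lt.
have [x0 _] := card_gt0P (dom_nonempty _ C).
apply: le_lt_trans (val_lt [ffun=> x0]).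
by apply: sumr_ge0 => f _; apply: sumr_ge0 => x _; rewrite mulr_ge0 ?interp_ge0.
Qed.

Definition reweight {B : structure s} {z : tup B -> rat} (z_ge0 : forall k, 0 <= z k) :
    structure s :=
  @Structure s _ (dom_nonempty _ B) (fun f x => z (Tagged _ x)) (fun f x => z_ge0 _).

Lemma val_reweight {A B : structure s} {z : tup B -> rat} (z_ge0 : forall k, 0 <= z k)
    (g : {ffun dom A -> dom B}) :
  @Defs.val s A (reweight z_ge0) g = \sum_(k : tup B) z k * preim_weight g (tagged k).
Proof.
rewrite /Defs.val (eq_bigr _ (fun f _ => sum_preim_weight g f _)).
rewrite (sig_big_dep xpredT (fun=> xpredT)
  (fun f x => interp (reweight z_ge0) f x * preim_weight g x)).
by apply: eq_bigr => -[f x].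
Qed.

Lemma preim_weight_id {B : structure s} (f : sym s) (x : (ar f).-tuple (dom B)) :
  preim_weight [ffun b => b] x = interp B f x.
Proof.
rewrite /preim_weight (eq_bigl (pred1 x)) ?big_pred1_eq // => y /=.
by congr (_ == x); apply: eq_from_tnth => i; rewrite tnth_map ffunE.
Qed.

Lemma overcast_normalized {A B : structure s} (y : {ffun dom A -> dom B} -> rat) :
    (forall g, 0 <= y g) -> 0 < \sum_g y g ->
    (forall k : tup B,
       0 <= \sum_g (preim_weight g (tagged k) - interp B _ (tagged k)) * y g) ->
  overcast [ffun g => y g / \sum_g' y g'].
Proof.
move=> y_ge0 y_pos yM; split=> [g|| f x].
- by rewrite ffunE divr_ge0 // ltW.
- by under eq_bigr do rewrite ffunE; rewrite -mulr_suml divff // gt_eqF.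
have := yM (Tagged _ x); under eq_bigr do rewrite mulrBl.
rewrite sumrB -mulr_sumr subr_ge0 => yMx.
under eq_bigr do rewrite ffunE mulrAC; rewrite -mulr_suml ler_pdivlMr //.
by under [X in _ <= X]eq_bigr do rewrite mulrC.
Qed.

Lemma overcast_succeq {A B : structure s}
    (w : {ffun {ffun dom A -> dom B} -> rat}) :
  overcast w -> succeq A B.
Proof.
case=> w_ge0 w_sum1 wB C; apply/bigmax_leP; split=> [|h _]; first exact: bigmax_ge_id.
have -> : opt A C = \sum_g w g * opt A C by rewrite -mulr_suml w_sum1 mul1r.
apply: le_trans (ler_sum _ (fun g _ =>
  ler_wpM2l (w_ge0 g) (val_le_opt A C [ffun a => h (g a)]))).
under eq_bigr do rewrite val_comp mulr_sumr.
rewrite exchange_big; apply: ler_sum => f _.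
under eq_bigr do rewrite mulr_sumr.
rewrite exchange_big; apply: ler_sum => x _.
under eq_bigr do rewrite mulrCA.
by rewrite -mulr_sumr mulrC ler_wpM2l ?interp_ge0 ?wB.
Qed.

Lemma succeq_overcast (A B : structure s) :
  succeq A B -> exists w : {ffun {ffun dom A -> dom B} -> rat}, overcast w.
Proof.
move=> A_succeq_B.
pose M (k : tup B) (g : {ffun dom A -> dom B}) :=
  preim_weight g (tagged k) - interp B _ (tagged k).
have [[y [y_ge0 y_pos yM]]|[z z_ge0 zM]] := ville_alternative M.
  by exists [ffun g => y g / \sum_g' y g']; apply: overcast_normalized.
pose C := reweight z_ge0.
have val_lt_id (g : {ffun dom A -> dom C}) : Defs.val g < @Defs.val _ B C [ffun b => b].
  rewrite !val_reweight -subr_lt0 -sumrB.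
  by under eq_bigr do rewrite preim_weight_id -mulrBr; apply: zM.
have := A_succeq_B C; rewrite leNgt => /negP[].
exact: lt_le_trans (opt_lt val_lt_id) (val_le_opt B C _).
Qed.

End Structures.

Theorem proposition9 (s : signature) (A B : structure s) :
  succeq A B <-> exists w : {ffun {ffun dom A -> dom B} -> rat}, overcast w.
Proof.
split=> [|[w]]; [exact: succeq_overcast | exact: overcast_succeq].
Qed.
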